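(* Let $p$ be a prime and let $G$ be a nontrivial finite $p$-group. Then there exists an element $z\in G$ of order $p$ such that $|I_{\mathcal C}(z)|=n_G$.
   Context: For a finite group $G$ and $x\in G$, let $I_{\mathcal C}(x)=\{y\in G : \langle x,y\rangle \text{ is cyclic}\}$. For a nontrivial finite group $G$, $n_G=\max\{|I_{\mathcal C}(x)| : x\in G\setminus\{1\}\}$. *)

From mathcomp Require Import all_boot all_fingroup all_solvable.
From mathcomp Require Import pgroup cyclic.
Set Implicit Arguments. Unset Strict Implicit. Unset Printing Implicit Defensive.
Local Open Scope group_scope.

Definition cyclicizer (gT : finGroupType) (G : {set gT}) (x : gT) : {set gT} :=
  [set y in G | cyclic <<[set x; y]>>].

Definition nG (gT : finGroupType) (G : {set gT}) : nat :=
  \max_(x in G^#) #|cyclicizer G x|.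

From mathcomp Require Import all_boot all_fingroup all_solvable.
From mathcomp Require Import pgroup cyclic.

(* Take x != 1 with |I_C(x)| = n_G and let z be the power of x of order p.
   Every subgroup <z, y> lies in <x, y>, and subgroups of cyclic groups are
   cyclic, so I_C(x) is contained in I_C(z); maximality of x forces equality
   of the cardinalities. *)

Set Implicit Arguments.
Unset Strict Implicit.
Unset Printing Implicit Defensive.

Local Open Scope group_scope.

Section Cyclicizer.

Variables (gT : finGroupType) (G : {group gT}).

Lemma cyclicizerX (x : gT) (n : nat) :
  x \in G -> cyclicizer G x \subset cyclicizer G (x ^+ n).
Proof.
move=> xG; apply/subsetP => y; rewrite !inE => /andP[yG cyc_xy].
rewrite yG; apply: cyclicS cyc_xy; rewrite gen_subG.
apply/subsetP => w; rewrite !inE => /orP[] /eqP->.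
- by rewrite groupX // mem_gen // !inE eqxx.
- by rewrite mem_gen // !inE eqxx orbT.
Qed.

Lemma leq_cyclicizer_nG (x : gT) : x \in G^# -> #|cyclicizer G x| <= nG G.
Proof. exact: leq_bigmax_cond. Qed.

Lemma nG_attained : G :!=: 1 -> exists2 x, x \in G^# & nG G = #|cyclicizer G x|.
Proof.
case/trivgPn => y yG ny1.
have G1_gt0 : 0 < #|G^#| by apply/card_gt0P; exists y; rewrite !inE ny1.
by case/(eq_bigmax_cond (fun x => #|cyclicizer G x|)): G1_gt0 => x; exists x.
Qed.

End Cyclicizer.

Lemma orderX_cofactor (gT : finGroupType) (x : gT) (d : nat) :
  d %| #[x] -> #[x ^+ (#[x] %/ d)] = d.
Proof.
move=> dvd_d_x; rewrite orderXdiv ?dvdn_div // divnA //.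
by rewrite mulKn ?order_gt0.
Qed.

Lemma p_elt_dvd_order (gT : finGroupType) (p : nat) (x : gT) :
  p.-elt x -> x != 1 -> p %| #[x].
Proof. by move=> p_x nx1; case/pgroup_pdiv: p_x; rewrite ?cycle_eq1. Qed.

Theorem lemma2p1 (gT : finGroupType) (G : {group gT}) (p : nat) :
  prime p -> pgroup p G -> G :!=: 1%g ->
  exists2 z, z \in G & (#[z]%g = p /\ #|cyclicizer G z| = nG G).
Proof.
move=> p_pr pG ntG.
have [x /setD1P[nx1 xG] nG_x] := nG_attained ntG.
have p_dvd_x : p %| #[x] by apply: p_elt_dvd_order (mem_p_elt pG xG) nx1.
set z := x ^+ (#[x] %/ p).
have oz : #[z] = p by apply: orderX_cofactor.
have zG : z \in G by rewrite groupX.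
have z_neq1 : z != 1 by rewrite -order_eq1 oz; apply: contraTneq p_pr => ->.
exists z => //; split=> //; apply/eqP; rewrite eqn_leq.
rewrite leq_cyclicizer_nG ?inE ?z_neq1 //=.
by rewrite nG_x subset_leq_card ?cyclicizerX.
Qed.
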